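(* Let $B^0=\bigcup_{n\in\mathbb{Z}}\{(n,k):\ k=0,1,\dots,2^{|n|}\}\subset\mathbb{H}$. Then $\bar{\mathcal H}_{B^0}(x)=0$ for all $x\in B^0$.
   Context: $\mathbb{H}=\{(x_1,x_2)\in\mathbb{Z}^2:\ x_2\ge 0\}$ and $L_n=\{(x_1,n):x_1\in\mathbb{Z}\}$. $(S_n)_{n\ge0}$ is a simple random walk on $\mathbb{Z}^2$; $P_z$ denotes its law started at $z$. For $A\subset\mathbb{Z}^2$, $\bar\tau_A=\min\{n\ge0: S_n\in A\}$. For $B\subset\mathbb{H}$, $x\in B$ and $N\ge1$, define $$\bar{\mathcal H}_{B,N}(x)=\sum_{z\in L_N\setminus B}P_z\big(S_{\bar\tau_{B\cup L_0}}=x\big).$$ It is known that the limit $\bar{\mathcal H}_B(x)=\lim_{N\to\infty}\bar{\mathcal H}_{B,N}(x)$ exists and is finite for every $B\subset\mathbb{H}$ and $x\in B$; it is called the stationary harmonic measure of $x$ with respect to $B$. *)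

From Stdlib Require Import Reals ZArith List Bool.
Import ListNotations.
Open Scope R_scope.

Definition pt := (Z * Z)%type.

Definition pt_eqb (a b : pt) : bool :=
  (Z.eqb (fst a) (fst b) && Z.eqb (snd a) (snd b))%bool.

Definition step (d : nat) : pt :=
  match d with
  | 0%nat => (1%Z, 0%Z) | 1%nat => ((-1)%Z, 0%Z)
  | 2%nat => (0%Z, 1%Z) | _ => (0%Z, (-1)%Z)
  end.

Definition padd (a b : pt) : pt := ((fst a + fst b)%Z, (snd a + snd b)%Z).

(* All 4^k step sequences of length k (each equally likely, prob 4^-k). *)
Fixpoint all_paths (k : nat) : list (list nat) :=
  match k with
  | O => [ [] ]
  | S k' => flat_map (fun p => map (fun d => d :: p) (seq 0 4)) (all_paths k')
  end.

(* [hits A z ds x]: the walk started at z following steps ds has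
   its first visit to A (times 0,1,...) exactly at time |ds|, at the point x. *)
Fixpoint hits (A : pt -> bool) (z : pt) (ds : list nat) (x : pt) : bool :=
  match ds with
  | [] => (A z && pt_eqb z x)%bool
  | d :: ds' => (negb (A z) && hits A (padd z (step d)) ds' x)%bool
  end.

(* P_z( bar tau_A = k, S_{bar tau_A} = x ) *)
Definition hit_prob_k (A : pt -> bool) (z x : pt) (k : nat) : R :=
  INR (length (filter (fun ds => hits A z ds x) (all_paths k))) / 4 ^ k.

(* Partial sum over k = 0..n of the above; P_z(S_{bar tau_A} = x) is its
   limit (nondecreasing in n). *)
Definition hit_prob_upto (A : pt -> bool) (z x : pt) (n : nat) : R :=
  fold_right Rplus 0 (map (hit_prob_k A z x) (seq 0 (S n))).

Definition inH (z : pt) : bool := Z.leb 0 (snd z).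
Definition onL0 (z : pt) : bool := Z.eqb (snd z) 0.

Definition union (A B : pt -> bool) : pt -> bool := fun z => (A z || B z)%bool.

(* Truncation of bar H_{B,N}(x): z ranges over (z1, N) with |z1| <= M,
   z not in B, and hitting time at most n. *)
Definition Hbar_trunc (B : pt -> bool) (N : nat) (x : pt) (n M : nat) : R :=
  fold_right Rplus 0
    (map (fun i : nat =>
            let z : pt := ((Z.of_nat i - Z.of_nat M)%Z, Z.of_nat N) in
            if B z then 0 else hit_prob_upto (union B onL0) z x n)
         (seq 0 (S (2 * M)))).

(* [Hbar_N_is B N x h]: h = bar H_{B,N}(x), the (nonnegative-term) sum
   over z in L_N \ B of P_z(S_{bar tau_{B u L_0}} = x), i.e. the supremum
   of its finite truncations. *)
Definition Hbar_N_is (B : pt -> bool) (N : nat) (x : pt) (h : R) : Prop :=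
  is_lub (fun r => exists n M : nat, r = Hbar_trunc B N x n M) h.

Definition B0 (z : pt) : bool :=
  (Z.leb 0 (snd z) && Z.leb (snd z) (2 ^ Z.abs (fst z)))%bool.

(* Up to a height shift, phi(n, u) = 1/(u(u+1)) - 3 n^2/((u-1) u (u+1) (u+2))
   is positive and superharmonic on the region above [B0] and on its
   neighbours.  By a discrete maximum principle the probability of first
   reaching [B0 u L0] at [x] from such a point [z] is at most phi(z)/phi(x).
   A point of [L_N] outside [B0] satisfies [2^|z1| < N], so there are fewer
   than [2N] of them, and phi is [O(N^-2)] on [L_N]; hence the harmonic
   measure seen from [L_N] is [O(1/N)]. *)

From Stdlib Require Import Reals ZArith List Lra Lia Psatz.
Open Scope R_scope.

Lemma length_filter_cons4 (Q : list nat -> bool) (L : list (list nat)) :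
  length (filter Q (flat_map (fun p => map (fun d => d :: p) (seq 0 4)) L)) =
  (length (filter (fun p => Q (0%nat :: p)) L) + length (filter (fun p => Q (1%nat :: p)) L)
   + length (filter (fun p => Q (2%nat :: p)) L) + length (filter (fun p => Q (3%nat :: p)) L))%nat.
Proof.
  induction L as [|p L IH]; [reflexivity|].
  cbn [flat_map]. rewrite filter_app, length_app, IH. simpl.
  destruct (Q (0%nat :: p)), (Q (1%nat :: p)), (Q (2%nat :: p)), (Q (3%nat :: p)); simpl; lia.
Qed.

Definition neighbour_sum (g : pt -> R) (z : pt) : R :=
  g (padd z (step 0)) + g (padd z (step 1)) + g (padd z (step 2)) + g (padd z (step 3)).

Lemma hit_prob_k_0 A z x :
  hit_prob_k A z x 0 = if (A z && pt_eqb z x)%bool then 1 else 0.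
Proof. unfold hit_prob_k; simpl. destruct (A z && pt_eqb z x)%bool; simpl; lra. Qed.

Lemma hit_prob_k_S_in A z x k : A z = true -> hit_prob_k A z x (S k) = 0.
Proof.
  intros Hz. unfold hit_prob_k. simpl all_paths. rewrite length_filter_cons4.
  simpl hits. rewrite Hz. simpl.
  assert (Hnil : forall L : list (list nat), length (filter (fun _ => false) L) = 0%nat)
    by (induction L; simpl; auto).
  rewrite !Hnil. simpl. lra.
Qed.

Lemma hit_prob_k_S_out A z x k : A z = false ->
  hit_prob_k A z x (S k) = / 4 * neighbour_sum (fun w => hit_prob_k A w x k) z.
Proof.
  intros Hz. unfold hit_prob_k, neighbour_sum. simpl all_paths. rewrite length_filter_cons4.
  simpl hits. rewrite Hz. simpl negb. simpl andb.
  rewrite !plus_INR. simpl pow. field. apply pow_nonzero. lra.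
Qed.

Lemma sum_map_0 {T} (l : list T) (F : T -> R) :
  (forall i, F i = 0) -> fold_right Rplus 0 (map F l) = 0.
Proof. intros HF. induction l as [|i l IH]; simpl; [lra|]. rewrite HF, IH; lra. Qed.

Lemma sum_map_scal {T} (l : list T) (c : R) (F : T -> R) :
  fold_right Rplus 0 (map (fun i => c * F i) l) = c * fold_right Rplus 0 (map F l).
Proof. induction l as [|i l IH]; simpl; [lra|]. rewrite IH; ring. Qed.

Lemma sum_map_add {T} (l : list T) (F G : T -> R) :
  fold_right Rplus 0 (map (fun i => F i + G i) l)
  = fold_right Rplus 0 (map F l) + fold_right Rplus 0 (map G l).
Proof. induction l as [|i l IH]; simpl; [lra|]. rewrite IH; ring. Qed.

Lemma sum_map_le {T} (l : list T) (F G : T -> R) :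
  (forall i, F i <= G i) -> fold_right Rplus 0 (map F l) <= fold_right Rplus 0 (map G l).
Proof. intros HFG. induction l as [|i l IH]; simpl; [lra|]. pose proof (HFG i); lra. Qed.

Lemma sum_map_ge0 {T} (l : list T) (F : T -> R) :
  (forall i, 0 <= F i) -> 0 <= fold_right Rplus 0 (map F l).
Proof. intros HF. induction l as [|i l IH]; simpl; [lra|]. pose proof (HF i); lra. Qed.

Lemma hit_prob_upto_S A z x n :
  hit_prob_upto A z x (S n)
  = hit_prob_k A z x 0 + fold_right Rplus 0 (map (fun k => hit_prob_k A z x (S k)) (seq 0 (S n))).
Proof.
  unfold hit_prob_upto. change (seq 0 (S (S n))) with (0%nat :: seq 1 (S n)).
  rewrite <- seq_shift. cbn [map fold_right]. rewrite map_map. reflexivity.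
Qed.

Lemma hit_prob_upto_in A z x n : A z = true ->
  hit_prob_upto A z x n = if pt_eqb z x then 1 else 0.
Proof.
  intros Hz. destruct n as [|n].
  - unfold hit_prob_upto. simpl. rewrite hit_prob_k_0, Hz. simpl.
    destruct (pt_eqb z x); lra.
  - rewrite hit_prob_upto_S, hit_prob_k_0, Hz, sum_map_0
      by (intros k; apply hit_prob_k_S_in; exact Hz).
    simpl. destruct (pt_eqb z x); lra.
Qed.

Lemma hit_prob_upto_0_out A z x : A z = false -> hit_prob_upto A z x 0 = 0.
Proof. intros Hz. unfold hit_prob_upto. simpl. rewrite hit_prob_k_0, Hz. simpl. lra. Qed.

Lemma hit_prob_upto_S_out A z x n : A z = false ->
  hit_prob_upto A z x (S n) = / 4 * neighbour_sum (fun w => hit_prob_upto A w x n) z.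
Proof.
  intros Hz. rewrite hit_prob_upto_S, hit_prob_k_0, Hz. simpl andb.
  rewrite (map_ext _ _ (fun k => hit_prob_k_S_out A z x k Hz)).
  unfold neighbour_sum. rewrite sum_map_scal, !sum_map_add. unfold hit_prob_upto. lra.
Qed.

Lemma hit_prob_upto_ge0 A z x n : 0 <= hit_prob_upto A z x n.
Proof.
  unfold hit_prob_upto. apply sum_map_ge0. intros k. unfold hit_prob_k.
  apply Rmult_le_pos; [apply pos_INR|]. apply Rlt_le, Rinv_0_lt_compat, pow_lt; lra.
Qed.

Lemma pt_eqb_eq (a b : pt) : pt_eqb a b = true -> a = b.
Proof.
  destruct a as [a1 a2], b as [b1 b2]. unfold pt_eqb; simpl.
  intros [E1 E2]%andb_prop. apply Z.eqb_eq in E1, E2. subst. reflexivity.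
Qed.

Section Comparison.

Variables (A : pt -> bool) (F : pt -> Prop) (g : pt -> R) (x : pt).
Hypothesis F_unabsorbed : forall z, F z -> A z = false.
Hypothesis F_step_closed : forall z d, F z -> (d < 4)%nat ->
  A (padd z (step d)) = false -> F (padd z (step d)).
Hypothesis g_ge0 : forall z, F z -> 0 <= g z.
Hypothesis g_step_ge0 : forall z d, F z -> (d < 4)%nat -> 0 <= g (padd z (step d)).
Hypothesis g_supharm : forall z, F z -> neighbour_sum g z <= 4 * g z.
Hypothesis g_target_pos : 0 < g x.

Lemma hit_prob_upto_le_supharm n z : F z -> hit_prob_upto A z x n <= g z / g x.
Proof.
  revert z. induction n as [|n IH]; intros z Hz.
  - rewrite hit_prob_upto_0_out by auto. apply Rle_mult_inv_pos; auto.
  - rewrite hit_prob_upto_S_out by auto.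
    assert (Hnb : forall d, (d < 4)%nat ->
      hit_prob_upto A (padd z (step d)) x n <= g (padd z (step d)) / g x).
    { intros d Hd. destruct (A (padd z (step d))) eqn:Hin.
      - rewrite hit_prob_upto_in by exact Hin.
        destruct (pt_eqb (padd z (step d)) x) eqn:Hx.
        + apply pt_eqb_eq in Hx. rewrite Hx. right. field. lra.
        + apply Rle_mult_inv_pos; auto.
      - apply IH, F_step_closed; auto. }
    pose proof (Hnb 0%nat ltac:(lia)). pose proof (Hnb 1%nat ltac:(lia)).
    pose proof (Hnb 2%nat ltac:(lia)). pose proof (Hnb 3%nat ltac:(lia)).
    assert (Hsup : neighbour_sum g z / g x <= 4 * g z / g x)
      by (apply Rmult_le_compat_r; [apply Rlt_le, Rinv_0_lt_compat; exact g_target_pos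
                                   | apply g_supharm; exact Hz]).
    unfold neighbour_sum, Rdiv in *. lra.
Qed.

End Comparison.

(* A discrete analogue of Re (u + i n)^-2 = 1/u^2 - 3 n^2/u^4 + ..., harmonic
   in the half plane and decaying like u^-2 in the height [u]. *)
Definition phi (n u : R) : R :=
  / (u * (u + 1)) - 3 * (n * n) / ((u - 1) * u * (u + 1) * (u + 2)).

Lemma phi_supharm n u : 2 < u ->
  phi (n + 1) u + phi (n - 1) u + phi n (u + 1) + phi n (u - 1) <= 4 * phi n u.
Proof.
  intros Hu.
  assert (Hdefect : 4 * phi n u - (phi (n + 1) u + phi (n - 1) u + phi n (u + 1) + phi n (u - 1))
                    = 60 * (n * n) / ((u - 2) * (u - 1) * u * (u + 1) * (u + 2) * (u + 3)))
    by (unfold phi; field; repeat split; lra).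
  assert (0 <= 60 * (n * n) / ((u - 2) * (u - 1) * u * (u + 1) * (u + 2) * (u + 3))); [|lra].
  apply Rle_mult_inv_pos; [nra|]. repeat apply Rmult_lt_0_compat; lra.
Qed.

Lemma phi_pos n u : 1 < u -> 3 * (n * n) < (u - 1) * (u + 2) -> 0 < phi n u.
Proof.
  intros Hu Hn.
  replace (phi n u) with (((u - 1) * (u + 2) - 3 * (n * n)) / ((u - 1) * u * (u + 1) * (u + 2)))
    by (unfold phi; field; repeat split; lra).
  apply Rlt_mult_inv_pos; [lra|]. repeat apply Rmult_lt_0_compat; lra.
Qed.

Lemma phi_le n u : 1 < u -> phi n u <= / (u * (u + 1)).
Proof.
  intros Hu. unfold phi.
  assert (0 <= 3 * (n * n) / ((u - 1) * u * (u + 1) * (u + 2))); [|lra].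
  apply Rle_mult_inv_pos; [nra|]. repeat apply Rmult_lt_0_compat; lra.
Qed.

Lemma sqr_le_pow2 (k : Z) : (k * k <= 2 * 2 ^ Z.abs k)%Z.
Proof.
  assert (Hnat : forall m : nat, (m * m <= 2 * 2 ^ m)%nat).
  { induction m as [|m IH]; [simpl; lia|].
    destruct (Nat.lt_ge_cases m 3) as [Hm|Hm].
    - destruct m as [|[|[|]]]; simpl; lia.
    - rewrite Nat.pow_succ_r'. nia. }
  replace (k * k)%Z with (Z.abs k * Z.abs k)%Z
    by (destruct (Z.abs_spec k) as [[_ E]|[_ E]]; rewrite E; ring).
  rewrite <- (Z2Nat.id (Z.abs k)) by lia.
  rewrite <- (Nat2Z.inj_pow 2). pose proof (Hnat (Z.to_nat (Z.abs k))). lia.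
Qed.

(* The height shift makes the weight positive at the target [x] as well as
   above [B0]. *)
Definition B0_shift (x : pt) : R := IZR (2 * Z.abs (fst x) + 4).

Definition B0_weight (x z : pt) : R := phi (IZR (fst z)) (IZR (snd z) + B0_shift x).

Lemma B0_shift_ge4 x : 4 <= B0_shift x.
Proof. apply IZR_le. lia. Qed.

Lemma B0_weight_pos x n y :
  (1 <= y)%Z -> (2 ^ Z.abs n <= 2 * y)%Z -> 0 < B0_weight x (n, y).
Proof.
  intros Hy Hpow. unfold B0_weight; cbn [fst snd].
  assert (Hn : (n * n <= 4 * y)%Z) by (pose proof (sqr_le_pow2 n); lia).
  apply IZR_le in Hn, Hy. rewrite !mult_IZR in Hn.
  pose proof (B0_shift_ge4 x) as Hc. set (c := B0_shift x) in *.
  assert ((IZR y + 3) * (IZR y + 6) <= (IZR y + c - 1) * (IZR y + c + 2))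
    by (apply Rmult_le_compat; lra).
  apply phi_pos; nra.
Qed.

Lemma B0_weight_target_pos x : (0 <= snd x)%Z -> 0 < B0_weight x x.
Proof.
  destruct x as [a b]; simpl. intros Hb. unfold B0_weight, B0_shift; cbn [fst snd].
  assert (Ha : (a * a = Z.abs a * Z.abs a)%Z)
    by (destruct (Z.abs_spec a) as [[_ E]|[_ E]]; rewrite E; ring).
  apply IZR_le in Hb. pose proof (IZR_le _ _ (Z.abs_nonneg a)).
  rewrite plus_IZR, mult_IZR. apply (f_equal IZR) in Ha. rewrite !mult_IZR in Ha.
  apply phi_pos; nra.
Qed.

Definition above_B0 (z : pt) : Prop := (2 ^ Z.abs (fst z) < snd z)%Z.

Lemma above_B0_unabsorbed z : above_B0 z -> union B0 onL0 z = false.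
Proof.
  destruct z as [n y]. unfold above_B0, union, B0, onL0; simpl. intros H.
  pose proof (Z.pow_pos_nonneg 2 (Z.abs n)).
  destruct (Z.leb_spec 0 y), (Z.leb_spec y (2 ^ Z.abs n)), (Z.eqb_spec y 0);
    simpl; try reflexivity; lia.
Qed.

Lemma not_B0_above_B0 z : (0 <= snd z)%Z -> B0 z = false -> above_B0 z.
Proof.
  destruct z as [n y]. unfold above_B0, B0; simpl. intros H.
  destruct (Z.leb_spec 0 y), (Z.leb_spec y (2 ^ Z.abs n)); simpl; try discriminate; lia.
Qed.

Lemma above_B0_step z d : above_B0 z -> (d < 4)%nat ->
  (1 <= snd (padd z (step d)))%Z /\
  (2 ^ Z.abs (fst (padd z (step d))) <= 2 * snd (padd z (step d)))%Z.
Proof.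
  destruct z as [n y]; unfold above_B0, padd; cbn [fst snd]; intros H Hd.
  pose proof (Z.pow_pos_nonneg 2 (Z.abs n) ltac:(lia) ltac:(lia)).
  assert (Hadj : forall m, (Z.abs (m - n) <= 1)%Z -> (2 ^ Z.abs m <= 2 * 2 ^ Z.abs n)%Z).
  { intros m Hm. rewrite <- Z.pow_succ_r by lia. apply Z.pow_le_mono_r; lia. }
  destruct d as [|[|[|[|]]]]; try lia; cbn [step fst snd]; split; try lia;
    (eapply Z.le_trans; [apply Hadj; lia | lia]).
Qed.

Lemma B0_weight_supharm x z : above_B0 z -> neighbour_sum (B0_weight x) z <= 4 * B0_weight x z.
Proof.
  destruct z as [n y]; unfold above_B0; cbn [fst snd]; intros H.
  pose proof (Z.pow_pos_nonneg 2 (Z.abs n) ltac:(lia) ltac:(lia)).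
  unfold neighbour_sum, B0_weight, padd; cbn [step fst snd].
  pose proof (B0_shift_ge4 x) as Hc. set (c := B0_shift x) in *.
  assert (Hy : 1 <= IZR y) by (apply IZR_le; lia).
  rewrite !plus_IZR, !Rplus_0_r.
  replace (IZR y + IZR 1 + c) with (IZR y + c + 1) by ring.
  replace (IZR y + IZR (-1) + c) with (IZR y + c - 1) by ring.
  replace (IZR n + IZR (-1)) with (IZR n - 1) by ring.
  apply phi_supharm. lra.
Qed.

Lemma hit_prob_above_B0_le x z n : (0 <= snd x)%Z -> above_B0 z ->
  hit_prob_upto (union B0 onL0) z x n <= B0_weight x z / B0_weight x x.
Proof.
  intros Hx Hz. apply (hit_prob_upto_le_supharm _ above_B0); auto.
  - exact above_B0_unabsorbed.
  - intros w d Hw Hd Hfree. apply not_B0_above_B0.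
    + destruct (above_B0_step w d Hw Hd); lia.
    + unfold union in Hfree. destruct (B0 (padd w (step d))); [discriminate | reflexivity].
  - intros [m y] Hw. unfold above_B0 in Hw; simpl in Hw.
    pose proof (Z.pow_pos_nonneg 2 (Z.abs m)). apply Rlt_le, B0_weight_pos; lia.
  - intros w d Hw Hd. destruct (above_B0_step w d Hw Hd).
    destruct (padd w (step d)) as [m y]. apply Rlt_le, B0_weight_pos; auto.
  - apply B0_weight_supharm.
  - apply B0_weight_target_pos, Hx.
Qed.

Lemma sum_window_le (K : R) (c r : Z) (len a : nat) : 0 <= K ->
  fold_right Rplus 0
    (map (fun i : nat => if (Z.abs (Z.of_nat i - c) <? r)%Z then K else 0) (seq a len))
  <= K * IZR (Z.max 0 (Z.min (Z.of_nat a + Z.of_nat len) (c + r)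
                       - Z.max (Z.of_nat a) (c - r + 1))).
Proof.
  intros HK. revert a. induction len as [|len IH]; intros a.
  - simpl. apply Rmult_le_pos; [exact HK | apply IZR_le; lia].
  - cbn [seq map fold_right]. specialize (IH (S a)).
    destruct (Z.ltb_spec (Z.abs (Z.of_nat a - c)) r).
    + replace (Z.max 0 (Z.min (Z.of_nat a + Z.of_nat (S len)) (c + r)
                        - Z.max (Z.of_nat a) (c - r + 1)))
        with (1 + Z.max 0 (Z.min (Z.of_nat (S a) + Z.of_nat len) (c + r)
                           - Z.max (Z.of_nat (S a)) (c - r + 1)))%Z by lia.
      rewrite plus_IZR. lra.
    + eapply Rle_trans; [rewrite Rplus_0_l; exact IH|].
      apply Rmult_le_compat_l; [exact HK | apply IZR_le; lia].
Qed.

Lemma Hbar_trunc_ge0 B N x n M : 0 <= Hbar_trunc B N x n M.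
Proof.
  apply sum_map_ge0. intros i. cbv zeta.
  destruct (B _); [lra | apply hit_prob_upto_ge0].
Qed.

Lemma hit_prob_level_le x z N n : (0 <= snd x)%Z -> snd z = Z.of_nat N -> B0 z = false ->
  (Z.abs (fst z) < Z.of_nat N)%Z /\
  hit_prob_upto (union B0 onL0) z x n
  <= / ((INR N + B0_shift x) * (INR N + B0_shift x + 1)) / B0_weight x x.
Proof.
  intros Hx Hlevel Hz.
  assert (Habove : above_B0 z) by (apply not_B0_above_B0; [lia | exact Hz]).
  split.
  - unfold above_B0 in Habove.
    pose proof (Z.pow_gt_lin_r 2 (Z.abs (fst z)) ltac:(lia) ltac:(lia)). lia.
  - eapply Rle_trans; [apply hit_prob_above_B0_le; assumption|].
    apply Rmult_le_compat_r;
      [apply Rlt_le, Rinv_0_lt_compat, B0_weight_target_pos, Hx|].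
    unfold B0_weight. rewrite Hlevel, <- INR_IZR_INZ.
    apply phi_le. pose proof (pos_INR N). pose proof (B0_shift_ge4 x). lra.
Qed.

Lemma double_div_sqr_le_inv_succ n c : 0 <= n -> 0 < c ->
  2 * n / ((n + c) * (n + c + 1)) <= 2 / (n + 1).
Proof.
  intros Hn Hc.
  apply Rmult_le_reg_r with ((n + c) * (n + c + 1) * (n + 1));
    [repeat apply Rmult_lt_0_compat; lra|].
  replace (2 * n / ((n + c) * (n + c + 1)) * ((n + c) * (n + c + 1) * (n + 1)))
    with (2 * n * (n + 1)) by (field; lra).
  replace (2 / (n + 1) * ((n + c) * (n + c + 1) * (n + 1)))
    with (2 * ((n + c) * (n + c + 1))) by (field; lra).
  nra.
Qed.

(* Only the [2N - 1] points of [L_N] with [|z1| < N] lie outside [B0], and the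
   weight decays like [N^-2] on [L_N]. *)
Lemma Hbar_trunc_B0_le x N n M : (0 <= snd x)%Z ->
  Hbar_trunc B0 N x n M <= 2 / B0_weight x x / (INR N + 1).
Proof.
  intros Hx. pose proof (B0_weight_target_pos x Hx) as HW.
  pose proof (B0_shift_ge4 x) as Hc. pose proof (pos_INR N) as HN.
  set (W := B0_weight x x) in *. set (c := B0_shift x) in *.
  set (K := / ((INR N + c) * (INR N + c + 1)) / W).
  assert (HK : 0 <= K)
    by (apply Rle_mult_inv_pos; [apply Rlt_le, Rinv_0_lt_compat, Rmult_lt_0_compat|]; lra).
  unfold Hbar_trunc.
  apply Rle_trans with (fold_right Rplus 0 (map (fun i : nat =>
    if (Z.abs (Z.of_nat i - Z.of_nat M) <? Z.of_nat N)%Z then K else 0) (seq 0 (S (2 * M))))).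
  { apply sum_map_le. intros i. cbv zeta.
    destruct (B0 _) eqn:Hz; [destruct (_ <? _)%Z; lra|].
    destruct (hit_prob_level_le x ((Z.of_nat i - Z.of_nat M)%Z, Z.of_nat N) N n Hx eq_refl Hz)
      as [Hwin Hle].
    cbn [fst] in Hwin.
    apply Z.ltb_lt in Hwin. rewrite Hwin. exact Hle. }
  eapply Rle_trans; [apply sum_window_le, HK|].
  apply Rle_trans with (K * (2 * INR N)).
  - apply Rmult_le_compat_l; [exact HK|].
    rewrite INR_IZR_INZ, <- mult_IZR. apply IZR_le. lia.
  - replace (K * (2 * INR N)) with (2 * INR N / ((INR N + c) * (INR N + c + 1)) / W)
      by (unfold K; field; lra).
    replace (2 / W / (INR N + 1)) with (2 / (INR N + 1) / W) by (field; lra).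
    apply Rmult_le_compat_r; [apply Rlt_le, Rinv_0_lt_compat, HW|].
    apply double_div_sqr_le_inv_succ; lra.
Qed.

Lemma Un_cv_0_squeeze_inv (u : nat -> R) (K : R) :
  (forall N, 0 <= u N <= K / (INR N + 1)) -> Un_cv u 0.
Proof.
  intros Hu eps Heps.
  assert (HK : 0 <= K) by (destruct (Hu 0%nat) as [H0 H1]; simpl in H1; lra).
  destruct (@RinvN_cv (eps / (K + 1)) ltac:(apply Rlt_mult_inv_pos; lra)) as [N0 HN0].
  exists N0. intros N HN. specialize (HN0 N HN). destruct (Hu N) as [Hlo Hhi].
  unfold Rdist in *. simpl in HN0. rewrite Rminus_0_r in *.
  pose proof (pos_INR N).
  rewrite Rabs_right in HN0 by (apply Rle_ge, Rlt_le, Rinv_0_lt_compat; lra).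
  rewrite Rabs_right by lra.
  assert (Hslack : u N <= (K + 1) * / (INR N + 1)).
  { unfold Rdiv in Hhi. apply Rle_trans with (1 := Hhi), Rmult_le_compat_r;
      [apply Rlt_le, Rinv_0_lt_compat|]; lra. }
  apply Rle_lt_trans with (1 := Hslack).
  apply Rmult_lt_compat_l with (r := K + 1) in HN0; [|lra].
  replace ((K + 1) * (eps / (K + 1))) with eps in HN0 by (field; lra). exact HN0.
Qed.

Lemma Hbar_N_B0_bracket x N : (0 <= snd x)%Z ->
  {h | Hbar_N_is B0 N x h /\ 0 <= h <= 2 / B0_weight x x / (INR N + 1)}.
Proof.
  intros Hx.
  set (E := fun r => exists n M : nat, r = Hbar_trunc B0 N x n M).
  assert (Hbound : forall r, E r -> 0 <= r <= 2 / B0_weight x x / (INR N + 1))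
    by (intros r [n [M ->]]; split; [apply Hbar_trunc_ge0 | apply Hbar_trunc_B0_le, Hx]).
  assert (Hne : E (Hbar_trunc B0 N x 0 0)) by (exists 0%nat, 0%nat; reflexivity).
  destruct (completeness E) as [h Hh].
  - exists (2 / B0_weight x x / (INR N + 1)). intros r Hr. apply Hbound, Hr.
  - exists (Hbar_trunc B0 N x 0 0). exact Hne.
  - exists h. split; [exact Hh|]. split.
    + apply Rle_trans with (Hbar_trunc B0 N x 0 0); [apply Hbar_trunc_ge0 | apply Hh, Hne].
    + apply Hh. intros r Hr. apply Hbound, Hr.
Qed.

Theorem mainTheorem2 :
  forall x : pt, B0 x = true ->
  exists h : nat -> R,
    (forall N : nat, (1 <= N)%nat -> Hbar_N_is B0 N x (h N)) /\
    Un_cv h 0.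
Proof.
  intros x HB.
  assert (Hx : (0 <= snd x)%Z)
    by (unfold B0 in HB; apply andb_prop in HB as [H _]; apply Z.leb_le, H).
  exists (fun N => proj1_sig (Hbar_N_B0_bracket x N Hx)). split.
  - intros N _. exact (proj1 (proj2_sig (Hbar_N_B0_bracket x N Hx))).
  - apply (Un_cv_0_squeeze_inv _ (2 / B0_weight x x)).
    intros N. exact (proj2 (proj2_sig (Hbar_N_B0_bracket x N Hx))).
Qed.
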